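(* Let $n\ge 2$, let $d$ be a positive even integer, and let $f$ be a form (homogeneous polynomial with real coefficients) of degree $d$ in $n$ variables. The following statements are equivalent: (i) $f$ is nonnegative on $\mathbb{R}^n$ and the function $x\mapsto f(x)^{1/d}$ is a norm on $\mathbb{R}^n$; (ii) $f$ is convex and positive definite, i.e. $f(x)>0$ for all $x\neq 0$; (iii) $f$ is strictly convex, i.e. $f(\lambda x+(1-\lambda)y)<\lambda f(x)+(1-\lambda)f(y)$ for all $x\neq y$ in $\mathbb{R}^n$ and all $\lambda\in(0,1)$.
   Context: A norm on $\mathbb{R}^n$ is a function $g:\mathbb{R}^n\to\mathbb{R}$ with $g(x)>0$ for $x\neq0$, $g(0)=0$, $g(\lambda x)=|\lambda|g(x)$ for all $\lambda\in\mathbb{R}$, $x\in\mathbb{R}^n$, and $g(x+y)\le g(x)+g(y)$ for all $x,y$. *)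

From Stdlib Require Import Reals List.
Open Scope R_scope.

(* Points of R^n are represented as functions nat -> R; only the first n
   coordinates (indices 0..n-1) are meaningful.  All notions below only look
   at these coordinates. *)

Fixpoint monom (n : nat) (a : nat -> nat) (x : nat -> R) : R :=
  match n with
  | O => 1
  | S m => monom m a x * x m ^ a m
  end.

Fixpoint mdeg (n : nat) (a : nat -> nat) : nat :=
  match n with
  | O => O
  | S m => (mdeg m a + a m)%nat
  end.

Definition poly_eval (n : nat) (l : list (R * (nat -> nat))) (x : nat -> R) : R :=
  fold_right (fun p acc => fst p * monom n (snd p) x + acc) 0 l.

Definition is_form (n d : nat) (f : (nat -> R) -> R) : Prop :=
  exists l : list (R * (nat -> nat)),
    (forall p, In p l -> mdeg n (snd p) = d) /\
    (forall x, f x = poly_eval n l x).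

Definition vzero : nat -> R := fun _ => 0.
Definition vadd (x y : nat -> R) : nat -> R := fun i => x i + y i.
Definition vscal (c : R) (x : nat -> R) : nat -> R := fun i => c * x i.

Definition is_zero_vec (n : nat) (x : nat -> R) : Prop := forall i, (i < n)%nat -> x i = 0.
Definition neq_vec (n : nat) (x y : nat -> R) : Prop := exists i, (i < n)%nat /\ x i <> y i.

Definition is_norm (n : nat) (g : (nat -> R) -> R) : Prop :=
  (forall x, neq_vec n x vzero -> 0 < g x) /\
  (forall x, is_zero_vec n x -> g x = 0) /\
  (forall (c : R) x, g (vscal c x) = Rabs c * g x) /\
  (forall x y, g (vadd x y) <= g x + g y).

(* The real d-th root of a nonnegative number y (0 for y <= 0). *)
Definition droot (d : nat) (y : R) : R :=
  if Rle_dec y 0 then 0 else Rpower y (/ INR d).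

Definition convex_on (n : nat) (f : (nat -> R) -> R) : Prop :=
  forall x y (l : R), 0 <= l <= 1 ->
    f (vadd (vscal l x) (vscal (1 - l) y)) <= l * f x + (1 - l) * f y.

Definition strictly_convex_on (n : nat) (f : (nat -> R) -> R) : Prop :=
  forall x y (l : R), neq_vec n x y -> 0 < l < 1 ->
    f (vadd (vscal l x) (vscal (1 - l) y)) < l * f x + (1 - l) * f y.

Definition pos_def (n : nat) (f : (nat -> R) -> R) : Prop :=
  forall x, neq_vec n x vzero -> 0 < f x.

From Stdlib Require Import Reals Lra Lia Psatz Classical FunctionalExtensionality List.
Open Scope R_scope.

(* (i) => (ii): if [g] is a norm, [f = g^d] is convex because [t |-> t^d] is convex and
   nondecreasing on [0, +oo).
   (ii) => (i): by homogeneity, the triangle inequality for [f^(1/d)] reduces to the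
   convexity of the unit ball [{f <= 1}].
   (iii) => (ii): [f x > 0] is the strict convexity inequality for [x], [-x] and their
   midpoint [0].
   (ii) => (iii): if strict convexity fails on a segment, the restriction of [f] to its
   line is a convex polynomial which agrees with a chord on a subinterval, hence is affine
   on the whole line; being nonnegative, it is constant.  Homogeneity and evenness then
   force [f] to vanish in the direction of the line, contradicting positivity. *)

(* [deg_le k p]: [p] is a polynomial function of degree at most [k], characterised
   by finite differences: for every step [h], [t |-> p (t + h) - p t] has degree
   at most [k - 1]. *)
Fixpoint deg_le (k : nat) (p : R -> R) : Prop :=
  match k with
  | O => forall t s, p t = p s
  | S k => forall h, deg_le k (fun t => p (t + h) - p t)
  end.

Definition is_poly (p : R -> R) : Prop := exists k, deg_le k p.

Lemma deg_le_ext k : forall p q, (forall t, p t = q t) -> deg_le k p -> deg_le k q.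
Proof.
  induction k as [|k IH]; simpl; intros p q E H.
  - intros t s. rewrite <- !E. apply H.
  - intros h. apply (IH (fun t => p (t + h) - p t)); [intros t; rewrite !E; reflexivity|apply H].
Qed.

Lemma deg_le_add k : forall p q, deg_le k p -> deg_le k q -> deg_le k (fun t => p t + q t).
Proof.
  induction k as [|k IH]; simpl; intros p q Hp Hq.
  - intros t s. rewrite (Hp t s), (Hq t s). reflexivity.
  - intros h. eapply deg_le_ext; [|apply (IH _ _ (Hp h) (Hq h))]. intros t; simpl; ring.
Qed.

Lemma deg_le_scal k : forall c p, deg_le k p -> deg_le k (fun t => c * p t).
Proof.
  induction k as [|k IH]; simpl; intros c p Hp.
  - intros t s. rewrite (Hp t s). reflexivity.
  - intros h. eapply deg_le_ext; [|apply (IH c _ (Hp h))]. intros t; simpl; ring.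
Qed.

Lemma deg_le_S k : forall p, deg_le k p -> deg_le (S k) p.
Proof.
  induction k as [|k IH]; intros p Hp.
  - intros h t s. simpl in Hp. rewrite (Hp (t + h) (s + h)), (Hp t s). reflexivity.
  - intros h. exact (IH _ (Hp h)).
Qed.

Lemma deg_le_weaken k m p : (k <= m)%nat -> deg_le k p -> deg_le m p.
Proof. induction 1; auto using deg_le_S. Qed.

Lemma deg_le_shift k : forall p s, deg_le k p -> deg_le k (fun t => p (t + s)).
Proof.
  induction k as [|k IH]; simpl; intros p s Hp.
  - intros t u. apply Hp.
  - intros h. eapply deg_le_ext; [|apply (IH _ s (Hp h))]. intros t; simpl.
    replace (t + s + h) with (t + h + s) by ring. reflexivity.
Qed.

(* Leibniz rule for differences: [Δ_h (p q) = (Δ_h p) (q (. + h)) + p (Δ_h q)]. *)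
Lemma deg_le_mul N : forall k m p q, (k + m = N)%nat -> deg_le k p -> deg_le m q ->
  deg_le N (fun t => p t * q t).
Proof.
  induction N as [|N IH]; intros k m p q E Hp Hq.
  - assert (k = 0%nat) by lia. assert (m = 0%nat) by lia. subst. simpl in *.
    intros t s. rewrite (Hp t s), (Hq t s). reflexivity.
  - destruct k as [|k].
    + simpl in E. subst m. eapply deg_le_ext; [|apply (deg_le_scal _ (p 0) q Hq)].
      intros t; simpl in Hp |- *. rewrite (Hp t 0). reflexivity.
    + destruct m as [|m].
      * replace N with k by lia. eapply deg_le_ext; [|apply (deg_le_scal _ (q 0) p Hp)].
        intros t; simpl in Hq |- *. rewrite (Hq t 0). ring.
      * intros h.
        eapply deg_le_ext; [|apply deg_le_add;
          [apply (IH k (S m) (fun t => p (t + h) - p t) (fun t => q (t + h)));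
             [lia|apply Hp|apply deg_le_shift, Hq]
          |apply (IH (S k) m p (fun t => q (t + h) - q t)); [lia|exact Hp|apply Hq]]].
        intros t; simpl; ring.
Qed.

Lemma deg_le_pow_affine j : forall a b, deg_le j (fun t => (a + t * b) ^ j).
Proof.
  induction j as [|j IH]; intros a b.
  - intros t s. reflexivity.
  - apply (deg_le_mul (S j) 1 j); [reflexivity| |apply IH].
    intros h t s. ring.
Qed.

Lemma is_poly_ext p q : (forall t, p t = q t) -> is_poly p -> is_poly q.
Proof. intros E [k H]; exists k; eapply deg_le_ext; eauto. Qed.

Lemma is_poly_const c : is_poly (fun _ => c).
Proof. exists 0%nat; intros t s; reflexivity. Qed.

Lemma is_poly_add p q : is_poly p -> is_poly q -> is_poly (fun t => p t + q t).
Proof.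
  intros [k Hk] [m Hm]; exists (Nat.max k m).
  apply deg_le_add; [apply (deg_le_weaken k)|apply (deg_le_weaken m)]; auto; lia.
Qed.

Lemma is_poly_mul p q : is_poly p -> is_poly q -> is_poly (fun t => p t * q t).
Proof. intros [k Hk] [m Hm]; exists (k + m)%nat. eapply deg_le_mul; eauto. Qed.

Lemma const_of_small_periods (p : R -> R) (e : R) : 0 < e ->
  (forall h s, 0 < h <= e -> p (s + h) = p s) -> forall s t, p t = p s.
Proof.
  intros He Hper.
  assert (Hiter : forall h, 0 < h <= e -> forall j s, p (s + INR j * h) = p s).
  { intros h Hh j; induction j as [|j IHj]; intros s.
    - simpl. f_equal. ring.
    - rewrite S_INR. replace (s + (INR j + 1) * h) with (s + INR j * h + h) by ring.
      rewrite Hper by exact Hh. apply IHj. }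
  assert (Hle : forall s t, s < t -> p t = p s).
  { intros s t Hst. destruct (INR_archimed e (t - s) He) as [N HN].
    assert (HNpos : 0 < INR N) by nra.
    set (h := (t - s) / INR N).
    assert (Hh : 0 < h <= e).
    { unfold h; split; [apply Rdiv_lt_0_compat; lra|].
      apply Rmult_le_reg_l with (INR N); [lra|]. field_simplify; lra. }
    rewrite <- (Hiter h Hh N s). f_equal. unfold h. field. lra. }
  intros s t. destruct (Rtotal_order s t) as [H|[H|H]]; [auto|subst; reflexivity|].
  symmetry; auto.
Qed.

Lemma deg_le_zero_on_interval k : forall p a b, a < b -> deg_le k p ->
  (forall t, a <= t <= b -> p t = 0) -> forall t, p t = 0.
Proof.
  induction k as [|k IH]; intros p a b Hab Hp Hz t.
  - rewrite (Hp t a). apply Hz. lra.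
  - set (e := (b - a) / 2).
    assert (Hper : forall h s, 0 < h <= e -> p (s + h) = p s).
    { intros h s Hh.
      assert (Hdiff := IH (fun t => p (t + h) - p t) a (a + e) ltac:(unfold e; lra) (Hp h)).
      simpl in Hdiff. enough (p (s + h) - p s = 0) by lra.
      apply Hdiff. intros u Hu. rewrite !Hz by (unfold e in *; lra). ring. }
    rewrite (const_of_small_periods p e ltac:(unfold e; lra) Hper a t). apply Hz. lra.
Qed.

Ltac vec_ext := apply functional_extensionality; intro; unfold vadd, vscal, vzero.

Lemma vadd_comm x y : vadd x y = vadd y x.
Proof. vec_ext. ring. Qed.

Lemma monom_scal n a c x : monom n a (vscal c x) = c ^ mdeg n a * monom n a x.
Proof.
  induction n as [|n IH]; simpl; [ring|].
  rewrite IH. unfold vscal. rewrite Rpow_mult_distr, pow_add. ring.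
Qed.

Lemma poly_eval_scal n d l c x : (forall p, In p l -> mdeg n (snd p) = d) ->
  poly_eval n l (vscal c x) = c ^ d * poly_eval n l x.
Proof.
  induction l as [|p l IH]; intros H; unfold poly_eval in *; simpl; [ring|].
  rewrite monom_scal, H by (left; auto). rewrite IH by (intros; apply H; right; auto). ring.
Qed.

Lemma monom_coord n a x y : (forall i, (i < n)%nat -> x i = y i) -> monom n a x = monom n a y.
Proof.
  induction n as [|n IH]; intros H; simpl; auto.
  rewrite IH by (intros; apply H; lia). rewrite H by lia. reflexivity.
Qed.

Lemma poly_eval_coord n l x y : (forall i, (i < n)%nat -> x i = y i) ->
  poly_eval n l x = poly_eval n l y.
Proof.
  intros H; induction l as [|p l IH]; unfold poly_eval in *; simpl; auto.
  rewrite IH, (monom_coord n _ x y H). reflexivity.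
Qed.

Lemma monom_line_poly n a x v : is_poly (fun t => monom n a (vadd x (vscal t v))).
Proof.
  induction n as [|n IH]; simpl; [apply is_poly_const|].
  apply is_poly_mul; auto. exists (a n).
  eapply deg_le_ext; [|apply (deg_le_pow_affine (a n) (x n) (v n))].
  intros t; unfold vadd, vscal. reflexivity.
Qed.

Lemma poly_eval_line_poly n l x v : is_poly (fun t => poly_eval n l (vadd x (vscal t v))).
Proof.
  induction l as [|p l IH]; unfold poly_eval in *; simpl; [apply is_poly_const|].
  apply is_poly_add; auto. apply is_poly_mul; [apply is_poly_const|apply monom_line_poly].
Qed.

Lemma pow_even_abs d c : Nat.Even d -> c ^ d = Rabs c ^ d.
Proof.
  intros [m ->]. rewrite !pow_sqr, <- Rabs_mult, Rabs_right; [reflexivity|].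
  apply Rle_ge, Rle_0_sqr.
Qed.

Lemma droot_nonpos d y : y <= 0 -> droot d y = 0.
Proof. intros H. unfold droot. destruct Rle_dec; [reflexivity|lra]. Qed.

Lemma droot_Rpower d y : 0 < y -> droot d y = Rpower y (/ INR d).
Proof. intros H. unfold droot. destruct Rle_dec; [lra|reflexivity]. Qed.

Lemma droot_nonneg d y : 0 <= droot d y.
Proof.
  destruct (Rle_lt_dec y 0) as [H|H].
  - rewrite droot_nonpos by exact H. lra.
  - rewrite droot_Rpower by exact H. left; apply exp_pos.
Qed.

Lemma droot_pos d y : 0 < y -> 0 < droot d y.
Proof. intros H. rewrite droot_Rpower by exact H. apply exp_pos. Qed.

Section Droot.

Variable d : nat.
Hypothesis hd : (0 < d)%nat.

Let INR_d_neq0 : INR d <> 0.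
Proof. apply not_0_INR. lia. Qed.

Lemma droot_pow y : 0 <= y -> droot d y ^ d = y.
Proof.
  intros [Hy|<-].
  - rewrite droot_Rpower, <- Rpower_pow by (try apply exp_pos; exact Hy).
    rewrite Rpower_mult, Rinv_l, Rpower_1 by (exact INR_d_neq0 || exact Hy). reflexivity.
  - rewrite droot_nonpos by lra. apply pow_i, hd.
Qed.

Lemma pow_droot a : 0 <= a -> droot d (a ^ d) = a.
Proof.
  intros [Ha|<-].
  - rewrite droot_Rpower, <- Rpower_pow by (try apply pow_lt; exact Ha).
    rewrite Rpower_mult, Rinv_r, Rpower_1 by (exact INR_d_neq0 || exact Ha). reflexivity.
  - rewrite pow_i by exact hd. apply droot_nonpos. lra.
Qed.

Lemma droot_le y1 y2 : 0 <= y1 <= y2 -> droot d y1 <= droot d y2.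
Proof.
  intros [[H1|<-] H12].
  - rewrite !droot_Rpower by lra. apply Rle_Rpower_l; [|lra].
    left; apply Rinv_0_lt_compat, lt_0_INR, hd.
  - rewrite droot_nonpos by lra. apply droot_nonneg.
Qed.

Lemma droot_mul a y : 0 <= a -> 0 <= y -> droot d (a ^ d * y) = a * droot d y.
Proof.
  intros [Ha|<-] [Hy|<-].
  - assert (Had : 0 < a ^ d) by (apply pow_lt, Ha).
    rewrite !droot_Rpower by (try apply Rmult_lt_0_compat; assumption).
    rewrite <- Rpower_mult_distr by assumption.
    rewrite <- droot_Rpower, pow_droot by lra. reflexivity.
  - rewrite Rmult_0_r, droot_nonpos by lra. ring.
  - rewrite pow_i, Rmult_0_l, droot_nonpos by (lra || exact hd). ring.
  - rewrite pow_i, Rmult_0_l, droot_nonpos by (lra || exact hd). ring.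
Qed.

End Droot.

Lemma pow_convex k : forall a b l, 0 <= a -> 0 <= b -> 0 <= l <= 1 ->
  (l * a + (1 - l) * b) ^ k <= l * a ^ k + (1 - l) * b ^ k.
Proof.
  induction k as [|k IH]; intros a b l Ha Hb Hl; simpl; [lra|].
  apply Rle_trans with ((l * a + (1 - l) * b) * (l * a ^ k + (1 - l) * b ^ k)).
  - apply Rmult_le_compat_l; [nra|]. apply IH; auto.
  - (* Chebyshev: [a - b] and [a^k - b^k] have the same sign. *)
    assert (0 <= (a - b) * (a ^ k - b ^ k)).
    { destruct (Rle_dec a b).
      - pose proof (pow_incr a b k ltac:(lra)). nra.
      - pose proof (pow_incr b a k ltac:(lra)). nra. }
    assert (l * (a * a ^ k) + (1 - l) * (b * b ^ k) -
            (l * a + (1 - l) * b) * (l * a ^ k + (1 - l) * b ^ k)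
            = (l * (1 - l)) * ((a - b) * (a ^ k - b ^ k))) by ring.
    assert (0 <= l * (1 - l)) by nra. nra.
Qed.

Definition convex_fun (phi : R -> R) : Prop :=
  forall mu a b, 0 <= mu <= 1 -> phi (mu * a + (1 - mu) * b) <= mu * phi a + (1 - mu) * phi b.

Lemma convex_poly_affine phi lm : convex_fun phi -> is_poly phi -> 0 < lm < 1 ->
  lm * phi 1 + (1 - lm) * phi 0 <= phi lm ->
  forall t, phi t = phi 0 + t * (phi 1 - phi 0).
Proof.
  intros Hc [k Hk] Hlm Hmid.
  set (psi := fun t => phi t - (phi 0 + t * (phi 1 - phi 0))).
  assert (psi_le : forall t, 0 <= t <= 1 -> psi t <= 0).
  { intros t Ht. pose proof (Hc t 1 0 Ht) as H.
    replace (t * 1 + (1 - t) * 0) with t in H by ring. unfold psi; lra. }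
  (* [lm] lies between [t] and [1]; convexity there forces [psi t >= 0]. *)
  assert (psi_ge : forall t, 0 <= t <= lm -> 0 <= psi t).
  { intros t Ht. set (mu := (1 - lm) / (1 - t)).
    assert (Hmu : 0 < mu <= 1).
    { unfold mu; split; [apply Rdiv_lt_0_compat; lra|].
      apply Rmult_le_reg_r with (1 - t); [lra|]. field_simplify; lra. }
    pose proof (Hc mu t 1 ltac:(lra)) as H.
    replace (mu * t + (1 - mu) * 1) with lm in H by (unfold mu; field; lra).
    assert (K : mu * psi t = mu * phi t - (lm - 1 + mu) * phi 1 - (1 - lm) * phi 0).
    { unfold psi, mu. field. lra. }
    apply Rmult_le_reg_l with mu; lra. }
  assert (psi_poly : deg_le (S k) psi).
  { unfold psi. apply (deg_le_ext _ (fun t => phi t + (- phi 0 + (phi 0 - phi 1) * t)));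
      [intros t; ring|].
    apply deg_le_add; [exact (deg_le_S k phi Hk)|].
    apply (deg_le_weaken 1); [lia|].
    intros h t s. ring. }
  intros t. enough (psi t = 0) by (unfold psi in *; lra).
  apply (deg_le_zero_on_interval (S k) psi 0 lm); [lra|exact psi_poly|].
  intros u Hu. pose proof (psi_le u ltac:(lra)). pose proof (psi_ge u Hu). lra.
Qed.

Lemma affine_nonneg_slope a b : (forall t, 0 <= a + t * b) -> b = 0.
Proof.
  intros H. destruct (Req_dec b 0) as [E|E]; [exact E|].
  pose proof (H (- (a + 1) / b)) as Hneg.
  replace (- (a + 1) / b * b) with (- (a + 1)) in Hneg by (field; exact E). lra.
Qed.

Lemma nonpos_of_le_pow_mul d a c : (0 < d)%nat ->
  (forall s, 0 < s -> a <= s ^ d * c) -> a <= 0.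
Proof.
  intros hd H. destruct (Rle_lt_dec a 0) as [Ha|Ha]; [exact Ha|exfalso].
  pose proof (Rabs_pos c) as Hc. pose proof (Rle_abs c).
  set (s := a / (a + Rabs c + 1)).
  assert (Es : s * (a + Rabs c + 1) = a) by (unfold s; field; lra).
  assert (Hs : 0 < s) by (unfold s; apply Rdiv_lt_0_compat; lra).
  assert (Hsd : s ^ d <= s).
  { destruct d as [|k]; [lia|]. simpl.
    pose proof (pow_incr s 1 k ltac:(nra)). rewrite pow1 in *. nra. }
  pose proof (H s Hs). pose proof (pow_le s d ltac:(lra)). nra.
Qed.

Section Form.

Variables (n d : nat) (f : (nat -> R) -> R).
Hypothesis hf : is_form n d f.

Lemma form_homog c x : f (vscal c x) = c ^ d * f x.
Proof. destruct hf as [l [Hdeg Hf]]. rewrite !Hf. apply poly_eval_scal, Hdeg. Qed.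

Lemma form_coord x y : (forall i, (i < n)%nat -> x i = y i) -> f x = f y.
Proof. destruct hf as [l [_ Hf]]. intros H. rewrite !Hf. apply poly_eval_coord, H. Qed.

Lemma form_line_poly x v : is_poly (fun t => f (vadd x (vscal t v))).
Proof.
  destruct hf as [l [_ Hf]].
  eapply is_poly_ext; [|apply (poly_eval_line_poly n l x v)]. intros t; simpl; rewrite Hf; reflexivity.
Qed.

Hypothesis hd : (0 < d)%nat.

Lemma convex_of_norm_droot : (forall x, 0 <= f x) ->
  is_norm n (fun x => droot d (f x)) -> convex_on n f.
Proof.
  intros Hnn [_ [_ [Hscal Htri]]] x y lm Hlm.
  pose proof (droot_nonneg d (f x)). pose proof (droot_nonneg d (f y)).
  set (z := vadd (vscal lm x) (vscal (1 - lm) y)).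
  assert (Hz : droot d (f z) <= lm * droot d (f x) + (1 - lm) * droot d (f y)).
  { eapply Rle_trans; [apply Htri|]. rewrite !Hscal, !Rabs_right by lra. lra. }
  rewrite <- (droot_pow d hd (f z)), <- (droot_pow d hd (f x)), <- (droot_pow d hd (f y))
    by apply Hnn.
  eapply Rle_trans; [apply pow_incr; split; [apply droot_nonneg|exact Hz]|].
  apply pow_convex; auto.
Qed.

Lemma pos_def_of_norm_droot : is_norm n (fun x => droot d (f x)) -> pos_def n f.
Proof.
  intros [Hpos _] x Hx. specialize (Hpos x Hx). simpl in Hpos.
  destruct (Rle_lt_dec (f x) 0) as [H|H]; [|exact H].
  rewrite droot_nonpos in Hpos by exact H. lra.
Qed.

Lemma form_zero x : is_zero_vec n x -> f x = 0.
Proof.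
  intros Hx. rewrite (form_coord x (vscal 0 x)).
  - rewrite form_homog, pow_i by exact hd. ring.
  - intros i Hi. unfold vscal. rewrite Hx by exact Hi. ring.
Qed.

Lemma zero_vec_of_pos_def x : pos_def n f -> f x <= 0 -> is_zero_vec n x.
Proof.
  intros Hp Hx i Hi. destruct (Req_dec (x i) 0) as [E|E]; [exact E|].
  exfalso. assert (0 < f x) by (apply Hp; exists i; auto). lra.
Qed.

Lemma pos_def_nonneg : pos_def n f -> forall x, 0 <= f x.
Proof.
  intros Hp x. destruct (Rle_lt_dec 0 (f x)) as [H|H]; [exact H|].
  rewrite form_zero in H by (apply zero_vec_of_pos_def; [exact Hp|lra]). lra.
Qed.

Lemma droot_form_subadditive x y : convex_on n f -> pos_def n f ->
  droot d (f (vadd x y)) <= droot d (f x) + droot d (f y).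
Proof.
  intros Hc Hp. pose proof (pos_def_nonneg Hp) as Hnn.
  assert (Hzero : forall u v, f u <= 0 -> f (vadd u v) = f v).
  { intros u v Hu. apply form_coord. intros i Hi. unfold vadd.
    rewrite (zero_vec_of_pos_def u Hp Hu i Hi). ring. }
  destruct (Rle_lt_dec (f x) 0) as [Ex|Ex].
  { rewrite Hzero, (droot_nonpos d (f x)) by exact Ex. lra. }
  destruct (Rle_lt_dec (f y) 0) as [Ey|Ey].
  { rewrite (vadd_comm x y), Hzero, (droot_nonpos d (f y)) by exact Ey. lra. }
  (* Normalise [x] and [y] to the unit sphere {f = 1}, whose convex hull stays in {f <= 1}. *)
  set (a := droot d (f x)). set (b := droot d (f y)).
  assert (Ha : 0 < a) by (apply droot_pos, Ex).
  assert (Hb : 0 < b) by (apply droot_pos, Ey).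
  assert (Hux : f (vscal (/ a) x) = 1).
  { rewrite form_homog, <- (droot_pow d hd (f x)), <- Rpow_mult_distr by (auto; lra).
    fold a. rewrite Rinv_l, pow1; lra. }
  assert (Huy : f (vscal (/ b) y) = 1).
  { rewrite form_homog, <- (droot_pow d hd (f y)), <- Rpow_mult_distr by (auto; lra).
    fold b. rewrite Rinv_l, pow1; lra. }
  set (lam := a / (a + b)).
  set (w := vadd (vscal lam (vscal (/ a) x)) (vscal (1 - lam) (vscal (/ b) y))).
  assert (Hw : f w <= 1).
  { assert (Hlam : 0 <= lam <= 1).
    { unfold lam; split; [apply Rlt_le, Rdiv_lt_0_compat; lra|].
      apply Rmult_le_reg_r with (a + b); [lra|]. field_simplify; lra. }
    pose proof (Hc (vscal (/ a) x) (vscal (/ b) y) lam Hlam) as H. fold w in H.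
    rewrite Hux, Huy in H. lra. }
  replace (vadd x y) with (vscal (a + b) w) by (unfold w, lam; vec_ext; field; lra).
  rewrite form_homog, droot_mul by (auto; lra).
  assert (droot d (f w) <= 1).
  { rewrite <- (pow_droot d hd 1), pow1 by lra. apply droot_le; auto. }
  nra.
Qed.

Lemma convex_of_strictly_convex : strictly_convex_on n f -> convex_on n f.
Proof.
  intros Hs x y lm Hlm.
  destruct (classic (neq_vec n x y)) as [Hxy|Hxy].
  - destruct (Req_dec lm 0) as [->|E0].
    + replace (vadd (vscal 0 x) (vscal (1 - 0) y)) with y by (vec_ext; ring). lra.
    + destruct (Req_dec lm 1) as [->|E1].
      * replace (vadd (vscal 1 x) (vscal (1 - 1) y)) with x by (vec_ext; ring). lra.
      * left. apply Hs; [exact Hxy|lra].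
  - assert (Exy : forall i, (i < n)%nat -> x i = y i).
    { intros i Hi. destruct (Req_dec (x i) (y i)) as [E|E]; [exact E|].
      exfalso; apply Hxy; exists i; auto. }
    rewrite (form_coord _ x), (form_coord y x) by
      (intros i Hi; unfold vadd, vscal; rewrite ?(Exy i Hi); ring).
    right; ring.
Qed.

Hypothesis hev : Nat.Even d.

Lemma form_abs_homog c x : f (vscal c x) = Rabs c ^ d * f x.
Proof. rewrite form_homog, pow_even_abs by exact hev. reflexivity. Qed.

Lemma norm_droot_of_convex : convex_on n f -> pos_def n f ->
  is_norm n (fun x => droot d (f x)).
Proof.
  intros Hc Hp. split; [|split; [|split]].
  - intros x Hx. apply droot_pos, Hp, Hx.
  - intros x Hx. rewrite form_zero by exact Hx. apply droot_nonpos. lra.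
  - intros c x. rewrite form_abs_homog. apply droot_mul; [exact hd|apply Rabs_pos|].
    apply (pos_def_nonneg Hp).
  - intros x y. apply droot_form_subadditive; assumption.
Qed.

Lemma pos_def_of_strictly_convex : strictly_convex_on n f -> pos_def n f.
Proof.
  intros Hs x Hx.
  assert (Hneg : neq_vec n x (vscal (-1) x)).
  { destruct Hx as [i [Hi Hxi]]. exists i; split; [exact Hi|].
    unfold vscal, vzero in *. lra. }
  pose proof (Hs x (vscal (-1) x) (1 / 2) Hneg ltac:(lra)) as H.
  replace (vadd (vscal (1 / 2) x) (vscal (1 - 1 / 2) (vscal (-1) x))) with (vscal 0 x) in H
    by (vec_ext; field).
  rewrite !form_abs_homog, Rabs_R0, pow_i in H by exact hd.
  replace (Rabs (-1)) with 1 in H by (rewrite Rabs_left; lra).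
  rewrite pow1 in H. lra.
Qed.

Lemma convex_on_line x v : convex_on n f -> convex_fun (fun t => f (vadd x (vscal t v))).
Proof.
  intros Hc mu a b Hmu.
  replace (vadd x (vscal (mu * a + (1 - mu) * b) v))
    with (vadd (vscal mu (vadd x (vscal a v))) (vscal (1 - mu) (vadd x (vscal b v))))
    by (vec_ext; ring).
  apply Hc, Hmu.
Qed.

(* If [f] were constant along the line [y + t v], homogeneity would make it equal to
   [s^d c] on the two lines [± s y + t v]; their midpoint [v] gives [f v <= s^d c]. *)
Lemma form_nonpos_of_const_on_line y v c : convex_on n f ->
  (forall t, f (vadd y (vscal t v)) = c) -> f v <= 0.
Proof.
  intros Hc Hconst. apply (nonpos_of_le_pow_mul d (f v) c hd). intros s Hs.
  assert (Hline : forall r, r <> 0 -> f (vadd (vscal r y) v) = Rabs r ^ d * c).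
  { intros r Hr. rewrite <- (Hconst (/ r)), <- form_abs_homog.
    f_equal. vec_ext. field. exact Hr. }
  pose proof (Hc (vadd (vscal s y) v) (vadd (vscal (- s) y) v) (1 / 2) ltac:(lra)) as H.
  replace (vadd (vscal (1 / 2) (vadd (vscal s y) v)) (vscal (1 - 1 / 2) (vadd (vscal (- s) y) v)))
    with v in H by (vec_ext; field).
  rewrite !Hline, Rabs_Ropp, Rabs_right in H by lra. lra.
Qed.

Lemma strictly_convex_of_convex_pos_def : convex_on n f -> pos_def n f ->
  strictly_convex_on n f.
Proof.
  intros Hc Hp x y lm Hxy Hlm.
  destruct (Rlt_le_dec (f (vadd (vscal lm x) (vscal (1 - lm) y))) (lm * f x + (1 - lm) * f y))
    as [Hlt|Hge]; [exact Hlt|exfalso].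
  set (v := vadd x (vscal (-1) y)).
  set (phi := fun t => f (vadd y (vscal t v))).
  assert (Hphi : forall t, phi t = f (vadd (vscal t x) (vscal (1 - t) y))).
  { intros t. unfold phi, v. f_equal. vec_ext. ring. }
  assert (Hphi0 : phi 0 = f y) by (rewrite Hphi; f_equal; vec_ext; ring).
  assert (Hphi1 : phi 1 = f x) by (rewrite Hphi; f_equal; vec_ext; ring).
  assert (Haff : forall t, phi t = phi 0 + t * (phi 1 - phi 0)).
  { apply convex_poly_affine with lm;
      [apply convex_on_line, Hc|apply form_line_poly|exact Hlm|].
    rewrite Hphi0, Hphi1, Hphi. exact Hge. }
  assert (Hslope : phi 1 - phi 0 = 0).
  { apply (affine_nonneg_slope (phi 0)). intros t. rewrite <- Haff. apply (pos_def_nonneg Hp). }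
  assert (Hv : neq_vec n v vzero).
  { destruct Hxy as [i [Hi Hne]]. exists i; split; [exact Hi|].
    unfold v, vadd, vscal, vzero. lra. }
  assert (f v <= 0).
  { apply (form_nonpos_of_const_on_line y v (phi 0) Hc). intros t.
    fold (phi t). rewrite Haff, Hslope. ring. }
  pose proof (Hp v Hv). lra.
Qed.

End Form.

Theorem theorem1 (n d : nat) (f : (nat -> R) -> R)
  (hn : (2 <= n)%nat) (hd : (0 < d)%nat) (hev : Nat.Even d)
  (hf : is_form n d f) :
  ((forall x, 0 <= f x) /\ is_norm n (fun x => droot d (f x))
     <-> convex_on n f /\ pos_def n f) /\
  (convex_on n f /\ pos_def n f <-> strictly_convex_on n f).
Proof.
  split; split.
  - intros [Hnn Hnorm]. split.
    + exact (convex_of_norm_droot n d f hd Hnn Hnorm).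
    + exact (pos_def_of_norm_droot n d f Hnorm).
  - intros [Hc Hp]. split.
    + exact (pos_def_nonneg n d f hf hd Hp).
    + exact (norm_droot_of_convex n d f hf hd hev Hc Hp).
  - intros [Hc Hp]. exact (strictly_convex_of_convex_pos_def n d f hf hd hev Hc Hp).
  - intros Hs. split.
    + exact (convex_of_strictly_convex n d f hf Hs).
    + exact (pos_def_of_strictly_convex n d f hf hd hev Hs).
Qed.
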